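(* Let $\mathcal S$ be any one of the five step sets $\mathcal A,\mathcal B,\mathcal C,\mathcal D,\mathcal E$, let $k\ge0$ and $Q_k\in S_k$. Then $\sum_{n\ge0}\#_{\mathcal S}\{(0,0)\xrightarrow{n}Q_k\}\,2^{-n}\in\mathbb Q$.
   Context: Let $\mathbb N=\{0,1,2,\dots\}$. For a step set $\mathcal S$, $\#_{\mathcal S}\{(0,0)\xrightarrow{n}(i,j)\}$ is the number of sequences $p_0=(0,0),p_1,\dots,p_n=(i,j)$ of points of $\mathbb N^2$ with $p_m-p_{m-1}\in\mathcal S$ for all $m$. The step sets are $\mathcal A=\{(-1,1),(1,1),(1,-1)\}$, $\mathcal B=\{(-1,1),(0,1),(1,0),(1,-1)\}$, $\mathcal C=\{(-1,1),(0,1),(1,1),(1,0),(1,-1)\}$, $\mathcal D=\{(-1,1),(0,1),(1,-1)\}$, $\mathcal E=\{(-1,1),(0,1),(1,1),(1,-1)\}$. For $k\ge0$, $S_k=\{(k-i,i):0\le i\le k\}$. *)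

From Stdlib Require Import Reals ZArith List QArith.
From Coquelicot Require Import Coquelicot.
Import ListNotations.

Definition point := (Z * Z)%type.

Definition stepA : list point := [(-1,1); (1,1); (1,-1)]%Z.
Definition stepB : list point := [(-1,1); (0,1); (1,0); (1,-1)]%Z.
Definition stepC : list point := [(-1,1); (0,1); (1,1); (1,0); (1,-1)]%Z.
Definition stepD : list point := [(-1,1); (0,1); (1,-1)]%Z.
Definition stepE : list point := [(-1,1); (0,1); (1,1); (1,-1)]%Z.

Fixpoint words (St : list point) (n : nat) : list (list point) :=
  match n with
  | O => [nil]
  | S m => flat_map (fun s => map (cons s) (words St m)) St
  end.

Fixpoint walk_ok (p : point) (w : list point) (target : point) : bool :=
  match w with
  | nil => (Z.eqb (fst p) (fst target) && Z.eqb (snd p) (snd target))%bool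
  | s :: w' =>
      let q := (fst p + fst s, snd p + snd s)%Z in
      (Z.leb 0 (fst q) && Z.leb 0 (snd q) && walk_ok q w' target)%bool
  end.

(* #_St{(0,0) --n--> target}: number of walks of length n in N^2 from (0,0)
   to target with steps in St (a walk p_0..p_n is determined by its steps). *)
Definition nwalks (St : list point) (n : nat) (target : point) : nat :=
  length (filter (fun w => walk_ok (0%Z, 0%Z) w target) (words St n)).

Definition Sk_point (k i : nat) : point := (Z.of_nat (k - i), Z.of_nat i).

From Stdlib Require Import Reals ZArith List QArith Qreals Lia Lra.
From Coquelicot Require Import Coquelicot.
Import ListNotations.
Open Scope R_scope.

(* Put F(p) := sum_n #{p --n--> Q_k} / 2^n.  Every step set consists of the
   horizontal steps (-1,1), (1,-1) and steps raising the level x + y, so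
   F(p) = [p = Q_k] + 1/2 sum_s F(p + s) (over the steps keeping p + s in N^2)
   and F vanishes above level k.  Convergence follows by comparison with the
   explicit supersolution 2 B^(k - x - y) (x + 1) (y + 1) for a large constant
   B: (x + 1) (y + 1) exceeds the average of its two horizontal neighbours by
   exactly 1, and the factor B^(-level) absorbs the level-raising steps.  On a
   level L <= k the values F(L - i, i) solve a discrete Dirichlet problem on
   {0..L} whose data involve F on higher levels only; solving it by shooting
   from i = 0 shows that its solution is rational when the data are, so F is
   rational by downward induction on the level. *)

Definition move (p s : point) : point := (fst p + fst s, snd p + snd s)%Z.

Definition in_quadrant (q : point) : bool := ((0 <=? fst q)%Z && (0 <=? snd q)%Z)%bool.

Definition level (p : point) : Z := (fst p + snd p)%Z.

Definition delta (t p : point) : R :=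
  if ((fst p =? fst t)%Z && (snd p =? snd t)%Z)%bool then 1 else 0.

Fixpoint neighbour_sum (St : list point) (f : point -> R) (p : point) : R :=
  match St with
  | [] => 0
  | s :: St' =>
      (if in_quadrant (move p s) then f (move p s) else 0) + neighbour_sum St' f p
  end.

Definition walks_from (St : list point) (n : nat) (p t : point) : nat :=
  length (filter (fun w => walk_ok p w t) (words St n)).

Definition gf_term (St : list point) (t p : point) (n : nat) : R :=
  INR (walks_from St n p t) / 2 ^ n.

Definition gf (St : list point) (t p : point) : R := Series (gf_term St t p).

Definition is_rational (x : R) : Prop := exists q : Q, x = Q2R q.

Lemma is_rational_IZR z : is_rational (IZR z).
Proof. exists (inject_Z z). unfold Q2R; simpl. field. Qed.

Lemma is_rational_INR n : is_rational (INR n).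
Proof. rewrite INR_IZR_INZ. apply is_rational_IZR. Qed.

Lemma is_rational_plus x y : is_rational x -> is_rational y -> is_rational (x + y).
Proof. intros [a ->] [b ->]. exists (a + b)%Q. symmetry; apply Q2R_plus. Qed.

Lemma is_rational_minus x y : is_rational x -> is_rational y -> is_rational (x - y).
Proof. intros [a ->] [b ->]. exists (a - b)%Q. symmetry; apply Q2R_minus. Qed.

Lemma is_rational_mult x y : is_rational x -> is_rational y -> is_rational (x * y).
Proof. intros [a ->] [b ->]. exists (a * b)%Q. symmetry; apply Q2R_mult. Qed.

Lemma is_rational_inv x : is_rational x -> is_rational (/ x).
Proof.
  intros [a ->]. destruct (Qeq_dec a 0) as [Ha | Ha].
  - rewrite (Qeq_eqR _ _ Ha), RMicromega.Q2R_0, Rinv_0. apply (is_rational_IZR 0).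
  - exists (/ a)%Q. now rewrite Q2R_inv.
Qed.

Lemma is_rational_delta t p : is_rational (delta t p).
Proof. unfold delta; destruct (_ && _)%bool; apply is_rational_IZR. Qed.

Ltac solve_rational :=
  repeat first [ assumption | apply is_rational_IZR | apply is_rational_INR
               | apply is_rational_delta | apply is_rational_minus | apply is_rational_plus
               | apply is_rational_mult | apply is_rational_inv ].

Lemma is_rational_neighbour_sum St f p :
  (forall s, In s St -> in_quadrant (move p s) = true -> is_rational (f (move p s))) ->
  is_rational (neighbour_sum St f p).
Proof.
  induction St as [|s St IH]; intros Hf; [apply (is_rational_IZR 0)|]; simpl.
  apply is_rational_plus; [|apply IH; auto with datatypes].
  destruct (in_quadrant (move p s)) eqn:Hq; [apply Hf; auto with datatypes|].
  apply (is_rational_IZR 0).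
Qed.

Section PathDirichletProblem.

Variables (L : nat) (b D : nat -> R).

Hypothesis b_rational : forall i, (i <= L)%nat -> is_rational (b i).

Hypothesis D_equation : forall i, (i <= L)%nat ->
  D i = b i + /2 * ((if (i <? L)%nat then D (S i) else 0) +
                    (if (0 <? i)%nat then D (pred i) else 0)).

Let affine_in_D0 (n : nat) : Prop :=
  exists c, is_rational c /\ D n = INR (S n) * D 0%nat + c.

Lemma path_solution_affine n : (n <= L)%nat -> affine_in_D0 n.
Proof.
  assert (affine0 : affine_in_D0 0).
  { exists 0; split; [apply (is_rational_IZR 0) | simpl; ring]. }
  assert (two_steps : forall m, (S m <= L)%nat -> affine_in_D0 m /\ affine_in_D0 (S m)).
  { induction m as [|m IH]; intros Hm.
    - split; [exact affine0|].
      exists (0 - 2 * b 0%nat); split.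
      + solve_rational. apply b_rational; lia.
      + pose proof (D_equation 0 ltac:(lia)) as E0.
        destruct (Nat.ltb_spec 0 L); [|lia]. simpl in *. lra.
    - destruct (IH ltac:(lia)) as [_ [c2 [Hc2 E2]]]. destruct (IH ltac:(lia)) as [[c1 [Hc1 E1]] _].
      split; [exists c2; auto|].
      exists (2 * c2 - c1 - 2 * b (S m)); split.
      + solve_rational. apply b_rational; lia.
      + pose proof (D_equation (S m) ltac:(lia)) as Em.
        destruct (Nat.ltb_spec (S m) L); [|lia].
        simpl pred in Em. change (0 <? S m)%nat with true in Em.
        replace (D (S (S m))) with (2 * D (S m) - D m - 2 * b (S m)) by lra.
        rewrite E1, E2, !S_INR. ring. }
  destruct n as [|n]; intros Hn; [exact affine0 | exact (proj2 (two_steps n Hn))].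
Qed.

Lemma path_solution_D0_rational : is_rational (D 0%nat).
Proof.
  pose proof (D_equation L (le_n L)) as EL. rewrite Nat.ltb_irrefl in EL.
  destruct (Nat.eq_dec L 0) as [HL | HL].
  - rewrite HL in EL, b_rational. simpl in EL.
    replace (D 0%nat) with (b 0%nat) by lra. apply b_rational; lia.
  - destruct (path_solution_affine L (le_n L)) as [c [Hc Ec]].
    destruct (path_solution_affine (pred L) ltac:(lia)) as [c' [Hc' Ec']].
    replace (0 <? L)%nat with true in EL by (symmetry; apply Nat.ltb_lt; lia).
    replace (S (pred L)) with L in Ec' by lia.
    rewrite Ec, Ec', S_INR in EL.
    assert (HL2 : INR L + 2 <> 0) by (pose proof (pos_INR L); lra).
    replace (D 0%nat) with (2 * (b L + /2 * c' - c) * / (INR L + 2))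
      by (field_simplify_eq; [lra | exact HL2]).
    solve_rational. apply b_rational; lia.
Qed.

Lemma path_solution_rational i : (i <= L)%nat -> is_rational (D i).
Proof.
  intros Hi. destruct (path_solution_affine i Hi) as [c [Hc ->]].
  pose proof path_solution_D0_rational. solve_rational.
Qed.

End PathDirichletProblem.

Lemma neighbour_sum_app St1 St2 f p :
  neighbour_sum (St1 ++ St2) f p = neighbour_sum St1 f p + neighbour_sum St2 f p.
Proof. induction St1 as [|s St1 IH]; simpl; [ring | rewrite IH; ring]. Qed.

Lemma neighbour_sum_ext St f g p :
  (forall q, f q = g q) -> neighbour_sum St f p = neighbour_sum St g p.
Proof. intros Hfg. induction St as [|s St IH]; simpl; [|rewrite Hfg, IH]; reflexivity. Qed.

Lemma neighbour_sum_scal St c f p :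
  neighbour_sum St (fun q => c * f q) p = c * neighbour_sum St f p.
Proof.
  induction St as [|s St IH]; simpl; [ring|].
  rewrite IH. destruct (in_quadrant (move p s)); ring.
Qed.

Lemma neighbour_sum_le St f g p :
  (forall q, in_quadrant q = true -> f q <= g q) ->
  neighbour_sum St f p <= neighbour_sum St g p.
Proof.
  intros Hfg. induction St as [|s St IH]; simpl; [lra|].
  destruct (in_quadrant (move p s)) eqn:Hq; [specialize (Hfg _ Hq)|]; lra.
Qed.

Lemma neighbour_sum_nonneg St f p :
  (forall q, in_quadrant q = true -> 0 <= f q) -> 0 <= neighbour_sum St f p.
Proof.
  intros Hf. induction St as [|s St IH]; simpl; [lra|].
  destruct (in_quadrant (move p s)) eqn:Hq; [specialize (Hf _ Hq)|]; lra.
Qed.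

Lemma neighbour_sum_eq_0 St f p :
  (forall s, In s St -> in_quadrant (move p s) = true -> f (move p s) = 0) ->
  neighbour_sum St f p = 0.
Proof.
  intros Hf. induction St as [|s St IH]; simpl; [reflexivity|].
  rewrite IH by auto with datatypes.
  destruct (in_quadrant (move p s)) eqn:Hq; [rewrite (Hf s (in_eq _ _) Hq)|]; ring.
Qed.

Lemma neighbour_sum_le_length St f p M :
  0 <= M -> (forall s, In s St -> in_quadrant (move p s) = true -> f (move p s) <= M) ->
  neighbour_sum St f p <= INR (length St) * M.
Proof.
  intros HM Hf. induction St as [|s St IH]; cbn [neighbour_sum length]; [simpl; lra|].
  rewrite S_INR.
  assert (neighbour_sum St f p <= INR (length St) * M) by (apply IH; auto with datatypes).
  destruct (in_quadrant (move p s)) eqn:Hq; [specialize (Hf s (in_eq _ _) Hq)|]; lra.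
Qed.

Lemma sum_n_neighbour_sum St (a : point -> nat -> R) p N :
  sum_n (fun n => neighbour_sum St (fun q => a q n) p) N =
  neighbour_sum St (fun q => sum_n (a q) N) p.
Proof.
  induction St as [|s St IH]; simpl.
  - rewrite sum_n_const. apply Rmult_0_r.
  - rewrite (sum_n_plus (G := R_AbelianMonoid)), IH.
    change (plus ?x ?y) with (x + y). f_equal.
    destruct (in_quadrant (move p s)); [reflexivity|]. rewrite sum_n_const. apply Rmult_0_r.
Qed.

Lemma is_series_0 : is_series (fun _ : nat => 0) 0.
Proof.
  apply (filterlim_ext (fun _ => 0)); [|apply filterlim_const].
  intros n. rewrite sum_n_const. symmetry. apply Rmult_0_r.
Qed.

Lemma is_series_neighbour_sum St (a : point -> nat -> R) (l : point -> R) p :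
  (forall q, in_quadrant q = true -> is_series (a q) (l q)) ->
  is_series (fun n => neighbour_sum St (fun q => a q n) p) (neighbour_sum St l p).
Proof.
  intros Hal. induction St as [|s St IH]; simpl; [apply is_series_0|].
  apply (is_series_plus (V := R_NormedModule)); [|exact IH].
  destruct (in_quadrant (move p s)) eqn:Hq; [apply Hal, Hq | apply is_series_0].
Qed.

Lemma walks_from_0 St p t : INR (walks_from St 0 p t) = delta t p.
Proof. unfold walks_from, delta; simpl. destruct (_ && _)%bool; reflexivity. Qed.

Lemma walks_from_first_step St n p s t :
  length (filter (fun w => walk_ok p w t) (map (cons s) (words St n))) =
  if in_quadrant (move p s) then walks_from St n (move p s) t else 0%nat.
Proof.
  unfold walks_from. induction (words St n) as [|w W IH]; simpl.
  - destruct (in_quadrant (move p s)); reflexivity.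
  - unfold in_quadrant, move in *; simpl in *.
    destruct (_ && _)%bool; simpl; [destruct (walk_ok _ w t); simpl|]; auto.
Qed.

Lemma walks_from_S St n p t :
  INR (walks_from St (S n) p t) = neighbour_sum St (fun q => INR (walks_from St n q t)) p.
Proof.
  enough (H : forall Steps,
    INR (length (filter (fun w => walk_ok p w t)
                        (flat_map (fun s => map (cons s) (words St n)) Steps))) =
    neighbour_sum Steps (fun q => INR (walks_from St n q t)) p) by apply H.
  induction Steps as [|s Steps IH]; [reflexivity|]; simpl flat_map.
  rewrite filter_app, length_app, plus_INR, IH, walks_from_first_step. simpl.
  destruct (in_quadrant (move p s)); reflexivity.
Qed.

Lemma gf_term_0 St t p : gf_term St t p 0 = delta t p.
Proof. unfold gf_term. rewrite walks_from_0. simpl. field. Qed.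

Lemma gf_term_S St t p n :
  gf_term St t p (S n) = /2 * neighbour_sum St (fun q => gf_term St t q n) p.
Proof.
  unfold gf_term, Rdiv. rewrite walks_from_S.
  rewrite (neighbour_sum_ext St (fun q => INR (walks_from St n q t) * / 2 ^ n)
                                (fun q => / 2 ^ n * INR (walks_from St n q t)))
    by (intros; ring).
  rewrite neighbour_sum_scal. simpl pow. rewrite Rinv_mult. ring.
Qed.

Lemma gf_term_nonneg St t p n : 0 <= gf_term St t p n.
Proof.
  unfold gf_term, Rdiv. apply Rmult_le_pos; [apply pos_INR|].
  apply Rlt_le, Rinv_0_lt_compat, pow_lt; lra.
Qed.

Lemma sum_n_shift (a : nat -> R) N : sum_n a (S N) = a 0%nat + sum_n (fun n => a (S n)) N.
Proof. unfold sum_n. rewrite sum_Sn_m by lia. now rewrite sum_n_m_S. Qed.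

Lemma ex_series_nonneg_bounded (a : nat -> R) M :
  (forall n, 0 <= a n) -> (forall N, sum_n a N <= M) -> ex_series a.
Proof.
  intros Ha HM. destruct (ex_finite_lim_seq_incr (sum_n a) M) as [l Hl]; auto.
  - intros n. rewrite sum_Sn. specialize (Ha (S n)). change (plus ?x ?y) with (x + y). lra.
  - exists l. exact Hl.
Qed.

Lemma gf_partial_sums_le_supersolution St t (W : point -> R) :
  (forall p, in_quadrant p = true -> 0 <= W p) ->
  (forall p, in_quadrant p = true -> delta t p + /2 * neighbour_sum St W p <= W p) ->
  forall N p, in_quadrant p = true -> sum_n (gf_term St t p) N <= W p.
Proof.
  intros W_nonneg W_super N. induction N as [|N IH]; intros p Hp.
  - rewrite sum_O, gf_term_0.
    pose proof (neighbour_sum_nonneg St W p W_nonneg). specialize (W_super p Hp). lra.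
  - rewrite sum_n_shift, gf_term_0.
    rewrite (sum_n_ext _ _ N (gf_term_S St t p)), (sum_n_mult_l (K := R_Ring)).
    rewrite sum_n_neighbour_sum. change (mult ?x ?y) with (x * y).
    pose proof (neighbour_sum_le St _ _ p IH). specialize (W_super p Hp). lra.
Qed.

Lemma gf_fixed_point St t p :
  (forall q, in_quadrant q = true -> ex_series (gf_term St t q)) ->
  gf St t p = delta t p + /2 * neighbour_sum St (gf St t) p.
Proof.
  intros Hconv. apply is_series_unique, is_series_decr_1.
  rewrite gf_term_0.
  replace (plus _ _) with (/2 * neighbour_sum St (gf St t) p)
    by (change (plus ?x (opp ?y)) with (x + - y); ring).
  apply (is_series_ext (fun n => /2 * neighbour_sum St (fun q => gf_term St t q n) p)).
  { intros n. symmetry. apply gf_term_S. }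
  apply (is_series_scal (V := R_NormedModule)), is_series_neighbour_sum.
  intros q Hq. apply Series_correct, Hconv, Hq.
Qed.

Lemma gf_above_target St t p :
  (forall s, In s St -> (0 <= level s)%Z) -> (level t < level p)%Z -> gf St t p = 0.
Proof.
  intros St_level. unfold gf, gf_term.
  enough (H : forall n q, (level t < level q)%Z -> INR (walks_from St n q t) = 0).
  { intros Hp. apply is_series_unique, (is_series_ext (fun _ => 0)); [|apply is_series_0].
    intros n. rewrite H by exact Hp. symmetry. apply Rmult_0_l. }
  clear p. induction n as [|n IH]; intros p Hp.
  - rewrite walks_from_0. unfold delta, level in *.
    destruct (Z.eqb_spec (fst p) (fst t)), (Z.eqb_spec (snd p) (snd t)); simpl;
      lia || reflexivity.
  - rewrite walks_from_S. apply neighbour_sum_eq_0. intros s Hs _. apply IH.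
    specialize (St_level s Hs). unfold level, move in *; simpl. lia.
Qed.

Lemma level_Sk_point L i : (i <= L)%nat -> level (Sk_point L i) = Z.of_nat L.
Proof. intros Hi. unfold level, Sk_point; simpl. lia. Qed.

Lemma Sk_point_of_quadrant p : in_quadrant p = true ->
  p = Sk_point (Z.to_nat (level p)) (Z.to_nat (snd p)) /\
  (Z.to_nat (snd p) <= Z.to_nat (level p))%nat.
Proof.
  destruct p as [x y]; unfold in_quadrant, level, Sk_point; simpl.
  intros [Hx%Z.leb_le Hy%Z.leb_le]%andb_prop. split; [f_equal|]; lia.
Qed.

Lemma neighbour_Sk_point_left L i (f : point -> R) : (i <= L)%nat ->
  (if in_quadrant (move (Sk_point L i) (-1, 1)%Z) then f (move (Sk_point L i) (-1, 1)%Z) else 0) =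
  (if (i <? L)%nat then f (Sk_point L (S i)) else 0).
Proof.
  intros Hi. unfold in_quadrant, move, Sk_point; simpl.
  destruct (Nat.ltb_spec i L).
  - replace (_ && _)%bool with true
      by (symmetry; apply andb_true_intro; split; apply Z.leb_le; lia).
    f_equal. f_equal; lia.
  - replace (0 <=? _)%Z with false by (symmetry; apply Z.leb_gt; lia). reflexivity.
Qed.

Lemma neighbour_Sk_point_right L i (f : point -> R) : (i <= L)%nat ->
  (if in_quadrant (move (Sk_point L i) (1, -1)%Z) then f (move (Sk_point L i) (1, -1)%Z) else 0) =
  (if (0 <? i)%nat then f (Sk_point L (pred i)) else 0).
Proof.
  intros Hi. unfold in_quadrant, move, Sk_point; simpl.
  destruct (Nat.ltb_spec 0 i).
  - replace (_ && _)%bool with true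
      by (symmetry; apply andb_true_intro; split; apply Z.leb_le; lia).
    f_equal. f_equal; lia.
  - replace (0 <=? Z.of_nat i + -1)%Z with false by (symmetry; apply Z.leb_gt; lia).
    now rewrite andb_false_r.
Qed.

Definition steps (up : list point) : list point := (-1, 1)%Z :: up ++ [(1, -1)%Z].

Section LevelRaisingSteps.

Variable up : list point.

Hypothesis up_raises_level :
  forall s, In s up -> (0 <= fst s)%Z /\ (0 <= snd s)%Z /\ (1 <= level s)%Z.

Variables (t : point) (k : nat).

Hypothesis level_t : level t = Z.of_nat k.

Lemma steps_level_nonneg s : In s (steps up) -> (0 <= level s)%Z.
Proof.
  unfold steps. intros [<- | [Hs | [<- | []]]%in_app_or]; try (unfold level; simpl; lia).
  destruct (up_raises_level s Hs) as (_ & _ & Hl). lia.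
Qed.

Lemma neighbour_sum_steps f p :
  neighbour_sum (steps up) f p =
  (if in_quadrant (move p (-1, 1)%Z) then f (move p (-1, 1)%Z) else 0) +
  (if in_quadrant (move p (1, -1)%Z) then f (move p (1, -1)%Z) else 0) +
  neighbour_sum up f p.
Proof. unfold steps. cbn [neighbour_sum]. rewrite neighbour_sum_app. simpl. ring. Qed.

Lemma neighbour_sum_steps_Sk_point f L i : (i <= L)%nat ->
  neighbour_sum (steps up) f (Sk_point L i) =
  (if (i <? L)%nat then f (Sk_point L (S i)) else 0) +
  (if (0 <? i)%nat then f (Sk_point L (pred i)) else 0) +
  neighbour_sum up f (Sk_point L i).
Proof.
  intros Hi. rewrite neighbour_sum_steps, neighbour_Sk_point_left, neighbour_Sk_point_right; auto.
Qed.

Definition growth : R := 1 + INR (length up) * (INR k + 1) ^ 2.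

Definition level_weight (L : Z) : R :=
  if (L <=? Z.of_nat k)%Z then 2 * growth ^ Z.to_nat (Z.of_nat k - L) else 0.

Definition supersolution (p : point) : R :=
  level_weight (level p) * ((IZR (fst p) + 1) * (IZR (snd p) + 1)).

Lemma growth_ge_1 : 1 <= growth.
Proof.
  unfold growth. pose proof (pos_INR (length up)). pose proof (pos_INR k).
  assert (0 <= INR (length up) * (INR k + 1) ^ 2) by (apply Rmult_le_pos; [|apply pow_le]; lra).
  lra.
Qed.

Lemma level_weight_nonneg L : 0 <= level_weight L.
Proof.
  unfold level_weight. destruct (_ <=? _)%Z; [|lra].
  pose proof (pow_R1_Rle growth (Z.to_nat (Z.of_nat k - L)) growth_ge_1). lra.
Qed.

Lemma level_weight_raise L L' : (L < L')%Z -> level_weight L' * growth <= level_weight L.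
Proof.
  intros HL. unfold level_weight at 1.
  destruct (Z.leb_spec L' (Z.of_nat k)); [|rewrite Rmult_0_l; apply level_weight_nonneg].
  unfold level_weight. destruct (Z.leb_spec L (Z.of_nat k)); [|lia].
  rewrite Rmult_assoc, (Rmult_comm _ growth), tech_pow_Rmult.
  apply Rmult_le_compat_l; [lra|]. apply Rle_pow; [apply growth_ge_1 | lia].
Qed.

Lemma delta_le_level_weight p : delta t p <= level_weight (level p) / 2.
Proof.
  unfold delta. destruct (Z.eqb_spec (fst p) (fst t)), (Z.eqb_spec (snd p) (snd t)); simpl;
    try (pose proof (level_weight_nonneg (level p)); lra).
  replace (level p) with (Z.of_nat k) by (rewrite <- level_t; unfold level; lia).
  unfold level_weight. rewrite Z.leb_refl.
  pose proof (pow_R1_Rle growth (Z.to_nat (Z.of_nat k - Z.of_nat k)) growth_ge_1). lra.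
Qed.

Lemma supersolution_nonneg p : in_quadrant p = true -> 0 <= supersolution p.
Proof.
  unfold in_quadrant. intros [Hx%Z.leb_le Hy%Z.leb_le]%andb_prop.
  apply IZR_le in Hx, Hy. unfold supersolution.
  apply Rmult_le_pos; [apply level_weight_nonneg | apply Rmult_le_pos; lra].
Qed.

Lemma supersolution_le p : in_quadrant p = true ->
  supersolution p <= level_weight (level p) * (INR k + 1) ^ 2.
Proof.
  unfold in_quadrant, supersolution, level_weight, level.
  intros [Hx%Z.leb_le Hy%Z.leb_le]%andb_prop.
  destruct (Z.leb_spec (fst p + snd p) (Z.of_nat k)); [|lra].
  apply Rmult_le_compat_l.
  - pose proof (pow_R1_Rle growth (Z.to_nat (Z.of_nat k - (fst p + snd p))) growth_ge_1). lra.
  - assert (Hx' : IZR (fst p) <= INR k) by (rewrite INR_IZR_INZ; apply IZR_le; lia).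
    assert (Hy' : IZR (snd p) <= INR k) by (rewrite INR_IZR_INZ; apply IZR_le; lia).
    apply IZR_le in Hx, Hy. simpl. rewrite Rmult_1_r.
    apply Rmult_le_compat; lra.
Qed.

(* The product (x + 1) (y + 1) vanishes where a horizontal step leaves the
   quadrant, so the quadrant test can be dropped. *)
Lemma supersolution_horizontal p : in_quadrant p = true ->
  (if in_quadrant (move p (-1, 1)%Z) then supersolution (move p (-1, 1)%Z) else 0) +
  (if in_quadrant (move p (1, -1)%Z) then supersolution (move p (1, -1)%Z) else 0) =
  2 * supersolution p - 2 * level_weight (level p).
Proof.
  unfold in_quadrant, supersolution, move, level; simpl.
  intros [Hx%Z.leb_le Hy%Z.leb_le]%andb_prop.
  replace (fst p + -1 + (snd p + 1))%Z with (fst p + snd p)%Z by ring.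
  replace (fst p + 1 + (snd p + -1))%Z with (fst p + snd p)%Z by ring.
  destruct (Z.leb_spec 0 (fst p + -1)), (Z.leb_spec 0 (snd p + 1)),
    (Z.leb_spec 0 (fst p + 1)), (Z.leb_spec 0 (snd p + -1)); try lia; simpl;
  rewrite ?plus_IZR; change (IZR (-1)) with (-1);
  repeat match goal with
  | H : (?a + -1 < 0)%Z |- _ => replace (IZR a) with 0 by (f_equal; lia); clear H
  end; ring.
Qed.

Lemma supersolution_raise p s : In s up -> in_quadrant p = true ->
  supersolution (move p s) <= level_weight (level p) * (INR k + 1) ^ 2 / growth.
Proof.
  intros Hs Hp. destruct (up_raises_level s Hs) as (Hsx & Hsy & Hs1).
  assert (Hq : in_quadrant (move p s) = true).
  { revert Hp. unfold in_quadrant, move; simpl.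
    intros [Hx%Z.leb_le Hy%Z.leb_le]%andb_prop. apply andb_true_intro; split; apply Z.leb_le; lia. }
  pose proof growth_ge_1 as Hg.
  apply (Rmult_le_reg_r growth); [lra|].
  unfold Rdiv. rewrite Rmult_assoc, Rinv_l, Rmult_1_r by lra.
  apply (Rle_trans _ (level_weight (level (move p s)) * growth * (INR k + 1) ^ 2)).
  - rewrite Rmult_assoc, (Rmult_comm growth), <- Rmult_assoc.
    apply Rmult_le_compat_r; [lra | apply supersolution_le, Hq].
  - apply Rmult_le_compat_r; [apply pow_le; pose proof (pos_INR k); lra|].
    apply level_weight_raise. unfold level, move in *; simpl. lia.
Qed.

Lemma supersolution_super p : in_quadrant p = true ->
  delta t p + /2 * neighbour_sum (steps up) supersolution p <= supersolution p.
Proof.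
  intros Hp. rewrite neighbour_sum_steps, supersolution_horizontal by exact Hp.
  pose proof growth_ge_1. pose proof (pos_INR k).
  set (w := level_weight (level p)).
  assert (Hw : 0 <= w) by apply level_weight_nonneg.
  assert (Hup : neighbour_sum up supersolution p <=
                INR (length up) * (w * (INR k + 1) ^ 2 / growth)).
  { apply neighbour_sum_le_length; [|intros s Hs _; apply supersolution_raise; assumption].
    apply Rmult_le_pos; [apply Rmult_le_pos; [exact Hw | apply pow_le; lra]|].
    apply Rlt_le, Rinv_0_lt_compat; lra. }
  assert (Hup_le_w : INR (length up) * (w * (INR k + 1) ^ 2 / growth) <= w).
  { replace (INR (length up) * (w * (INR k + 1) ^ 2 / growth))
      with (w * (INR (length up) * (INR k + 1) ^ 2) / growth) by (field; lra).
    apply Rle_div_l; [lra|]. apply Rmult_le_compat_l; [lra|]. unfold growth. lra. }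
  pose proof (delta_le_level_weight p) as Hdelta. fold w in Hdelta. lra.
Qed.

Lemma gf_converges p : in_quadrant p = true -> ex_series (gf_term (steps up) t p).
Proof.
  intros Hp. apply (ex_series_nonneg_bounded _ (supersolution p)); [apply gf_term_nonneg|].
  intros N.
  apply gf_partial_sums_le_supersolution; auto using supersolution_nonneg, supersolution_super.
Qed.

Lemma gf_steps_fixed_point p :
  gf (steps up) t p = delta t p + /2 * neighbour_sum (steps up) (gf (steps up) t) p.
Proof. apply gf_fixed_point, gf_converges. Qed.

Lemma gf_rational_near_top (m : nat) : forall p, in_quadrant p = true ->
  (Z.of_nat k < level p + Z.of_nat m)%Z -> is_rational (gf (steps up) t p).
Proof.
  induction m as [|m IH]; intros p Hp Hlevel.
  - rewrite gf_above_target; [apply (is_rational_IZR 0) | exact steps_level_nonneg | lia].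
  - destruct (Sk_point_of_quadrant p Hp) as [Ep Hi]. revert Ep Hi.
    generalize (Z.to_nat (level p)) (Z.to_nat (snd p)). intros L i -> Hi.
    rewrite level_Sk_point in Hlevel by exact Hi.
    apply (path_solution_rational L
      (fun j => delta t (Sk_point L j) + /2 * neighbour_sum up (gf (steps up) t) (Sk_point L j))
      (fun j => gf (steps up) t (Sk_point L j))); [| |exact Hi].
    + intros j Hj. solve_rational.
      apply is_rational_neighbour_sum. intros s Hs Hq. apply IH; [exact Hq|].
      destruct (up_raises_level s Hs) as (_ & _ & Hs1).
      revert Hs1 Hlevel. unfold level, move, Sk_point; simpl. lia.
    + intros j Hj. rewrite gf_steps_fixed_point, neighbour_sum_steps_Sk_point by exact Hj. ring.
Qed.

Lemma gf_origin_rational : exists q : Q, is_series (gf_term (steps up) t (0, 0)%Z) (Q2R q).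
Proof.
  destruct (gf_rational_near_top (S k) (0, 0)%Z eq_refl) as [q Hq]; [unfold level; simpl; lia|].
  exists q. rewrite <- Hq. apply Series_correct, gf_converges. reflexivity.
Qed.

End LevelRaisingSteps.

Theorem proposition2p12 :
  forall (St : list point), In St [stepA; stepB; stepC; stepD; stepE] ->
  forall (k i : nat), (i <= k)%nat ->
  exists q : Q,
    is_series (fun n : nat => INR (nwalks St n (Sk_point k i)) / 2 ^ n) (Q2R q).
Proof.
  intros St HSt k i Hik.
  assert (Ht : level (Sk_point k i) = Z.of_nat k) by exact (level_Sk_point k i Hik).
  simpl in HSt. destruct HSt as [<- | [<- | [<- | [<- | [<- | []]]]]];
  [ eapply (gf_origin_rational [(1, 1)%Z])
  | eapply (gf_origin_rational [(0, 1); (1, 0)]%Z)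
  | eapply (gf_origin_rational [(0, 1); (1, 1); (1, 0)]%Z)
  | eapply (gf_origin_rational [(0, 1)%Z])
  | eapply (gf_origin_rational [(0, 1); (1, 1)]%Z) ]; try exact Ht;
  intros s Hs; repeat destruct Hs as [<- | Hs]; try contradiction; unfold level; simpl; lia.
Qed.
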